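(* Let $V$ be a real vector space and let $C$ be a convex cone in $V$ with $0\in C$. Suppose $Y$ is a $C$-antichain-convex subset of $V$. Then: (1) for each $y\in\operatorname{co}(Y)$ there exists $z\in Y$ such that $z\in y+C$ (i.e., $y$ is $C$-Pareto dominated by some element of $Y$); (2) for each $y\in\operatorname{co}(Y)$ there exists $x\in Y$ such that $y\in x+C$ (i.e., $y$ $C$-Pareto dominates some element of $Y$).
   Context: A cone in a real vector space $V$ is a subset $C$ with $\lambda C\subseteq C$ for all $\lambda>0$ (it may be empty and need not contain $0$). A subset $S\subseteq V$ is $C$-antichain-convex iff for all $x,y\in S$ and $\lambda\in[0,1]$ with $y-x\notin C\cup(-C)$ one has $\lambda x+(1-\lambda)y\in S$. An element $v\in V$ is $C$-Pareto dominated by $z\in V$ iff $z\in v+C$. $\operatorname{co}$ denotes the convex hull. *)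

From HB Require Import structures.
From mathcomp Require Import all_boot all_order all_algebra.
From mathcomp Require Import reals.
Set Implicit Arguments. Unset Strict Implicit. Unset Printing Implicit Defensive.
Import Order.TTheory GRing.Theory Num.Theory.
Local Open Scope ring_scope.

Section Defs.
Context {R : realType} {V : lmodType R}.

Definition is_cone (C : V -> Prop) : Prop :=
  forall (l : R) (x : V), 0 < l -> C x -> C (l *: x).

Definition is_convex (S : V -> Prop) : Prop :=
  forall (x y : V) (l : R), S x -> S y -> 0 <= l -> l <= 1 ->
    S (l *: x + (1 - l) *: y).

Definition antichain_convex (C S : V -> Prop) : Prop :=
  forall (x y : V) (l : R), S x -> S y -> 0 <= l -> l <= 1 ->
    ~ (C (y - x) \/ C (- (y - x))) ->
    S (l *: x + (1 - l) *: y).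

Definition conv_hull (S : V -> Prop) : V -> Prop :=
  fun y => exists (n : nat) (w : 'I_n -> R) (x : 'I_n -> V),
    (forall i, 0 <= w i) /\ \sum_(i < n) w i = 1 /\
    (forall i, S (x i)) /\ y = \sum_(i < n) w i *: x i.

End Defs.

From HB Require Import structures.
From mathcomp Require Import all_boot all_order all_algebra.
From mathcomp Require Import reals.
From mathcomp Require Import ring.
From Stdlib Require Import Classical.
Set Implicit Arguments. Unset Strict Implicit.
Import Order.TTheory GRing.Theory Num.Theory.
Local Open Scope ring_scope.

(* Two weighted points a z1 + b z2 of Y are dominated by (a + b) z for some z
   in Y: if z1 and z2 are C-comparable take the larger one, otherwise their
   convex combination with weights a, b lies in Y by antichain-convexity and
   gives equality.  Since C + C is contained in C, induction on the number of
   points dominates every convex combination of points of Y.  Part (2) is part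
   (1) for the cone -C, for which Y is antichain-convex as well. *)

Section Cone.
Variables (R : realType) (V : lmodType R) (C : V -> Prop).
Hypotheses (coneC : is_cone C) (convexC : is_convex C) (C0 : C 0).

Lemma cone_scale_ge0 (l : R) (x : V) : 0 <= l -> C x -> C (l *: x).
Proof.
rewrite le_eqVlt => /predU1P[<- _|l_gt0 Cx]; first by rewrite scale0r.
exact: coneC.
Qed.

Lemma cone_add (a b : V) : C a -> C b -> C (a + b).
Proof.
move=> Ca Cb.
have half_ge0 : 0 <= (2 : R)^-1 by rewrite invr_ge0.
have half_le1 : (2 : R)^-1 <= 1 by rewrite invf_le1 // ler1n.
have := coneC (ltr0Sn R 1) (convexC Ca Cb half_ge0 half_le1).
have -> : 1 - (2 : R)^-1 = 2^-1 by field.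
by rewrite -scalerDr scalerA mulfV ?pnatr_eq0 // scale1r.
Qed.

Lemma cone_sub_trans (u v w : V) : C (u - v) -> C (v - w) -> C (u - w).
Proof. by move=> Cuv Cvw; rewrite -(subrKA v); apply: cone_add. Qed.

End Cone.

Section Opposite.
Variables (R : realType) (V : lmodType R) (C : V -> Prop).

Definition opp_cone : V -> Prop := fun v => C (- v).

Lemma is_cone_opp : is_cone C -> is_cone opp_cone.
Proof. by move=> coneC l v l_gt0 Cv; rewrite /opp_cone -scalerN; apply: coneC. Qed.

Lemma is_convex_opp : is_convex C -> is_convex opp_cone.
Proof.
by move=> convexC a b l Ca Cb l0 l1; rewrite /opp_cone opprD -!scalerN; apply: convexC.
Qed.

Lemma antichain_convex_opp (Y : V -> Prop) :
  antichain_convex C Y -> antichain_convex opp_cone Y.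
Proof.
move=> acY a b l Ya Yb l0 l1 incomparable; apply: acY => // comparable.
by apply: incomparable; rewrite /opp_cone opprK or_comm.
Qed.

End Opposite.

Section Domination.
Variables (R : realType) (V : lmodType R) (C Y : V -> Prop).
Hypotheses (coneC : is_cone C) (convexC : is_convex C) (C0 : C 0)
  (acY : antichain_convex C Y).

Lemma antichain_convex_pair_dominated (a b : R) (z1 z2 : V) :
  0 <= a -> 0 <= b -> Y z1 -> Y z2 ->
  exists z, Y z /\ C ((a + b) *: z - (a *: z1 + b *: z2)).
Proof.
move=> a_ge0 b_ge0 Yz1 Yz2.
have [C12|nC12] := classic (C (z1 - z2)).
  exists z1; split => //.
  rewrite scalerDl opprD addrACA subrr add0r -scalerBr.
  exact: cone_scale_ge0.
have [C21|nC21] := classic (C (z2 - z1)).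
  exists z2; split => //.
  rewrite scalerDl opprD addrACA subrr addr0 -scalerBr.
  exact: cone_scale_ge0.
have [ab0|ab_neq0] := eqVneq (a + b) 0.
  have /andP[/eqP a0 /eqP b0] : (a == 0) && (b == 0) by rewrite -paddr_eq0 ?ab0.
  by exists z1; rewrite ab0 a0 b0 !scale0r addr0 subrr.
have ab_gt0 : 0 < a + b by rewrite lt_def ab_neq0 addr_ge0.
pose l := a / (a + b).
have l_ge0 : 0 <= l by rewrite divr_ge0 // ltW.
have l_le1 : l <= 1 by rewrite ler_pdivrMr // mul1r lerDl.
exists (l *: z1 + (1 - l) *: z2); split.
  by apply: acY => // -[|]; rewrite ?opprB.
have -> : (a + b) *: (l *: z1 + (1 - l) *: z2) = a *: z1 + b *: z2.
  by rewrite scalerDr !scalerA /l; congr (_ *: _ + _ *: _); field.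
by rewrite subrr.
Qed.

Lemma antichain_convex_sum_dominated (n : nat) (w : 'I_n.+1 -> R)
    (x : 'I_n.+1 -> V) :
  (forall i, 0 <= w i) -> (forall i, Y (x i)) ->
  exists z, Y z /\ C ((\sum_(i < n.+1) w i) *: z - \sum_(i < n.+1) w i *: x i).
Proof.
elim: n w x => [|n IH] w x w_ge0 Yx.
  by exists (x ord0); rewrite !big_ord1 subrr.
have [z' [Yz' Cz']] := IH _ _ (fun i => w_ge0 (widen_ord (leqnSn n.+1) i))
  (fun i => Yx (widen_ord (leqnSn n.+1) i)).
set s := \sum_(i < n.+1) _ in Cz'; set t := \sum_(i < n.+1) _ in Cz'.
have s_ge0 : 0 <= s by apply: sumr_ge0.
have [z [Yz Cz]] := antichain_convex_pair_dominated s_ge0 (w_ge0 ord_max) Yz' (Yx ord_max).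
exists z; split => //; rewrite 2!(big_ord_recr n.+1) /= -/s -/t.
apply: (cone_sub_trans coneC convexC Cz).
by rewrite opprD addrACA subrr addr0.
Qed.

Lemma conv_hull_dominated (y : V) : conv_hull Y y -> exists z, Y z /\ C (z - y).
Proof.
case=> -[|n] [w [x [w_ge0 [w_sum1 [Yx ->]]]]].
  by move: w_sum1; rewrite big_ord0 => /eqP; rewrite eq_sym oner_eq0.
have [z [Yz Cz]] := antichain_convex_sum_dominated w_ge0 Yx.
by exists z; rewrite w_sum1 scale1r in Cz.
Qed.

End Domination.

Theorem lemma5 (R : realType) (V : lmodType R) (C Y : V -> Prop) :
  is_cone C -> is_convex C -> C 0 -> antichain_convex C Y ->
  (forall y, conv_hull Y y -> exists z, Y z /\ C (z - y)) /\
  (forall y, conv_hull Y y -> exists x, Y x /\ C (y - x)).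
Proof.
move=> coneC convexC C0 acY; split; first exact: conv_hull_dominated.
move=> y /(conv_hull_dominated (is_cone_opp coneC) (is_convex_opp convexC))[].
- by rewrite /opp_cone oppr0.
- exact: antichain_convex_opp.
- by move=> x [Yx Cx]; exists x; rewrite /opp_cone opprB in Cx.
Qed.
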